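(* For every $\alpha\in(0,\pi/2)$ and every good input, the cost of the Straight-Up algorithm equals $\cot\alpha$.
   Context: A drone with half angle-of-view $\alpha\in(0,\pi/2)$ at a point $(t_x,t_y)$, $t_y\ge0$, covers $[t_x-t_y\tan\alpha,t_x+t_y\tan\alpha]$ on the $x$-axis. An input is a sequence $X_0=(0,0),X_1,\dots,X_n$ ($n\ge1$) of points $X_i=(x_i,0)$ revealed online. A solution is a sequence of positions $P_0=(0,0),P_1,\dots,P_n$ in the closed upper half-plane with $P_i$ covering $X_0,\dots,X_i$; its cost is $\sum_i|P_iP_{i+1}|$. A request $X_{i+1}$ is redundant if $x_{i+1}\in[\min_{j\le i}x_j,\max_{j\le i}x_j]$. An input is good if it has no redundant requests, $\min_j x_j=-1$ and $\max_j x_j\in[0,1]$. The Straight-Up algorithm sets $P_i$ to be the lowest point of the $y$-axis that covers $X_0,\dots,X_i$. *)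

From Stdlib Require Import Reals Lra.
Open Scope R_scope.

Definition point := (R * R)%type.

(* Drone at t = (tx,ty), ty >= 0, with half angle-of-view alpha covers
   [tx - ty tan alpha, tx + ty tan alpha] on the x-axis. *)
Definition covers (alpha : R) (t : point) (x : R) : Prop :=
  0 <= snd t /\
  fst t - snd t * tan alpha <= x <= fst t + snd t * tan alpha.

(* P covers X_0, ..., X_i  (requests X_j = (x j, 0)). *)
Definition covers_upto (alpha : R) (x : nat -> R) (i : nat) (t : point) : Prop :=
  forall j, (j <= i)%nat -> covers alpha t (x j).

Definition dist (p q : point) : R :=
  sqrt ((fst p - fst q) ^ 2 + (snd p - snd q) ^ 2).

Fixpoint cost (P : nat -> point) (n : nat) : R :=
  match n with
  | O => 0
  | S k => cost P k + dist (P k) (P (S k))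
  end.

Fixpoint pmin (x : nat -> R) (i : nat) : R :=
  match i with
  | O => x O
  | S k => Rmin (pmin x k) (x (S k))
  end.
Fixpoint pmax (x : nat -> R) (i : nat) : R :=
  match i with
  | O => x O
  | S k => Rmax (pmax x k) (x (S k))
  end.

Definition input (x : nat -> R) (n : nat) : Prop := (1 <= n)%nat /\ x O = 0.

Definition redundant (x : nat -> R) (i : nat) : Prop :=
  pmin x i <= x (S i) <= pmax x i.

Definition good (x : nat -> R) (n : nat) : Prop :=
  input x n /\
  (forall i, (i < n)%nat -> ~ redundant x i) /\
  pmin x n = -1 /\ 0 <= pmax x n <= 1.

Definition lowest_on_y_axis (alpha : R) (x : nat -> R) (i : nat) (t : point) : Prop :=
  fst t = 0 /\ covers_upto alpha x i t /\
  forall y, 0 <= y -> covers_upto alpha x i (0, y) -> snd t <= y.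

Definition straight_up (alpha : R) (x : nat -> R) (n : nat) (P : nat -> point) : Prop :=
  forall i, (i <= n)%nat -> lowest_on_y_axis alpha x i (P i).

From Pilot Require Import Defs.
From Stdlib Require Import Reals Lra Lia.
Open Scope R_scope.

(* The drone at (0, y) sees exactly [-y tan alpha, y tan alpha], so Straight-Up
   sits at height r_i cot alpha, where the reach r_i = max(-min_{j<=i} x_j, max_{j<=i} x_j).
   The heights r_i cot alpha increase along the y-axis, hence the cost telescopes
   to (r_n - r_0) cot alpha = cot alpha, because r_0 = 0 and r_n = 1 for a good
   input. *)

Section Extrema.

Variable x : nat -> R.

Lemma pmin_pmax_bounds i j : (j <= i)%nat -> pmin x i <= x j <= pmax x i.
Proof.
  induction i as [|i IH]; intro Hj.
  - replace j with 0%nat by lia; simpl; lra.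
  - simpl. destruct (Nat.eq_dec j (S i)) as [->|Hne].
    + split; [apply Rmin_r | apply Rmax_r].
    + destruct (IH ltac:(lia)).
      pose proof (Rmin_l (pmin x i) (x (S i))).
      pose proof (Rmax_l (pmax x i) (x (S i))).
      lra.
Qed.

Lemma pmin_attained i : exists j, (j <= i)%nat /\ x j = pmin x i.
Proof.
  induction i as [|i [j [Hj E]]].
  - exists 0%nat; split; [lia | reflexivity].
  - simpl. unfold Rmin. destruct (Rle_dec (pmin x i) (x (S i))).
    + exists j; split; [lia | exact E].
    + exists (S i); split; [lia | reflexivity].
Qed.

Lemma pmax_attained i : exists j, (j <= i)%nat /\ x j = pmax x i.
Proof.
  induction i as [|i [j [Hj E]]].
  - exists 0%nat; split; [lia | reflexivity].
  - simpl. unfold Rmax. destruct (Rle_dec (pmax x i) (x (S i))).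
    + exists (S i); split; [lia | reflexivity].
    + exists j; split; [lia | exact E].
Qed.

Definition reach (i : nat) : R := Rmax (- pmin x i) (pmax x i).

Lemma reach_le_succ i : reach i <= reach (S i).
Proof.
  unfold reach; simpl.
  pose proof (Rmin_l (pmin x i) (x (S i))).
  pose proof (Rmax_l (pmax x i) (x (S i))).
  apply Rmax_lub.
  - eapply Rle_trans; [| apply Rmax_l]; lra.
  - eapply Rle_trans; [| apply Rmax_r]; lra.
Qed.

Hypothesis x0 : x O = 0.

Lemma reach_0 : reach O = 0.
Proof. unfold reach; simpl; rewrite x0, Ropp_0; apply Rmax_left; lra. Qed.

Lemma reach_nonneg i : 0 <= reach i.
Proof.
  destruct (pmin_pmax_bounds i 0 ltac:(lia)).
  unfold reach; eapply Rle_trans; [| apply Rmax_r]; lra.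
Qed.

End Extrema.

Section OnTheAxis.

Variables (alpha : R) (x : nat -> R).
Hypothesis tan_pos : 0 < tan alpha.

Lemma covers_upto_axis_iff i y :
  0 <= y -> covers_upto alpha x i (0, y) <-> reach x i <= y * tan alpha.
Proof.
  intro Hy. unfold covers_upto, covers, reach; simpl. split.
  - intro Hcov.
    destruct (pmin_attained x i) as [jmin [Hjmin Emin]].
    destruct (pmax_attained x i) as [jmax [Hjmax Emax]].
    destruct (Hcov jmin Hjmin) as [_ Hmin].
    destruct (Hcov jmax Hjmax) as [_ Hmax].
    apply Rmax_lub; lra.
  - intros Hr j Hj. destruct (pmin_pmax_bounds x i j Hj).
    pose proof (Rmax_l (- pmin x i) (pmax x i)).
    pose proof (Rmax_r (- pmin x i) (pmax x i)).
    split; [exact Hy | lra].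
Qed.

Hypothesis x0 : x O = 0.

Lemma lowest_on_y_axis_iff i t :
  lowest_on_y_axis alpha x i t <-> t = (0, reach x i / tan alpha).
Proof.
  pose proof (reach_nonneg x x0 i) as Hr.
  assert (Hh : 0 <= reach x i / tan alpha)
    by (apply Rmult_le_pos; [| left; apply Rinv_0_lt_compat]; lra).
  assert (Hcancel : reach x i / tan alpha * tan alpha = reach x i)
    by (field; lra).
  assert (Hlow : forall y, 0 <= y -> covers_upto alpha x i (0, y) ->
                 reach x i / tan alpha <= y).
  { intros y Hy Hcov. apply covers_upto_axis_iff in Hcov; [| exact Hy].
    apply (Rmult_le_reg_r (tan alpha)); lra. }
  destruct t as [a b]. unfold lowest_on_y_axis; simpl. split.
  - intros (-> & Hcov & Hmin).
    assert (Hb : 0 <= b) by exact (proj1 (Hcov O ltac:(lia))).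
    f_equal. apply Rle_antisym.
    + apply Hmin; [exact Hh |]. apply covers_upto_axis_iff; lra.
    + exact (Hlow b Hb Hcov).
  - intros [= -> ->]. split; [reflexivity | split].
    + apply covers_upto_axis_iff; lra.
    + exact Hlow.
Qed.

End OnTheAxis.

Lemma dist_y_axis (a b : R) : Defs.dist (0, a) (0, b) = Rabs (a - b).
Proof.
  unfold Defs.dist; cbn [fst snd].
  replace ((0 - 0) ^ 2 + (a - b) ^ 2) with (Rsqr (a - b)) by (unfold Rsqr; ring).
  apply sqrt_Rsqr_abs.
Qed.

Lemma cost_monotone_y_axis (P : nat -> point) (h : nat -> R) n :
  (forall k, (k <= n)%nat -> P k = (0, h k)) ->
  (forall k, (k < n)%nat -> h k <= h (S k)) ->
  cost P n = h n - h O.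
Proof.
  induction n as [|n IH]; intros HP Hh; simpl.
  - lra.
  - rewrite IH; [| intros k Hk; apply HP; lia | intros k Hk; apply Hh; lia].
    rewrite (HP n ltac:(lia)), (HP (S n) ltac:(lia)), dist_y_axis,
      Rabs_minus_sym, Rabs_pos_eq by (pose proof (Hh n ltac:(lia)); lra).
    ring.
Qed.

Theorem lemma3 (alpha : R) (x : nat -> R) (n : nat) :
  0 < alpha < PI / 2 ->
  good x n ->
  (exists P, straight_up alpha x n P) /\
  (forall P, straight_up alpha x n P -> cost P n = 1 / tan alpha).
Proof.
  intros [Ha0 Ha1] [[_ x0] [_ [Hmin Hmax]]].
  assert (Ht : 0 < tan alpha) by (apply tan_gt_0; lra).
  assert (Hreach : reach x n = 1).
  { unfold reach; rewrite Hmin, Rmax_left; lra. }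
  split.
  - exists (fun i => (0, reach x i / tan alpha)).
    intros i _. apply lowest_on_y_axis_iff; auto.
  - intros P HP.
    rewrite (cost_monotone_y_axis P (fun i => reach x i / tan alpha)).
    + rewrite Hreach, reach_0 by exact x0. field; lra.
    + intros k Hk. apply (lowest_on_y_axis_iff alpha x Ht x0), HP, Hk.
    + intros k _. apply Rmult_le_compat_r.
      * left; apply Rinv_0_lt_compat, Ht.
      * apply reach_le_succ.
Qed.
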